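(* Suppose DEIC holds and let $\psi_{\mathcal{I}}=\lambda_{\min}\bar\rho/3$. Let $\xi>0$. For any $\boldsymbol{\delta}=(\boldsymbol{\delta}_0,\dots,\boldsymbol{\delta}_G)\in\mathcal{H}$, with $\boldsymbol{\delta}_{0g}=\boldsymbol{\delta}_0+\boldsymbol{\delta}_g$ and $\xi_g=\xi\|\boldsymbol{\delta}_{0g}\|_2$, $$\sum_{g=1}^G\frac{n_g}{n}\,\xi_g\,Q_{2\xi_g}(\boldsymbol{\delta}_{0g})\ge\psi_{\mathcal{I}}\,\xi\,\frac{(\alpha-2\xi)^2}{4ck^2}\Big(\|\boldsymbol{\delta}_0\|_2+\sum_{g=1}^G\frac{n_g}{n}\|\boldsymbol{\delta}_g\|_2\Big),$$ and consequently $\inf_{\boldsymbol{\delta}\in\mathcal{H}}\sum_{g=1}^G\frac{n_g}{n}\xi_gQ_{2\xi_g}(\boldsymbol{\delta}_{0g})$ is bounded below by the same right-hand side expression.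
   Context: Let $\mathbf{x}\in\mathbb{R}^p$ be a zero-mean isotropic ($\mathbb{E}\mathbf{x}\mathbf{x}^T=I_p$) sub-Gaussian random vector with sub-Gaussian norm $\|\mathbf{x}\|_{\psi_2}\le k$ and $\alpha>0$ such that $\mathbb{E}|\langle\mathbf{x},\mathbf{u}\rangle|\ge\alpha$ for all $\mathbf{u}\in\mathbb{S}^{p-1}$; $c>0$ is an absolute constant such that $\mathbb{P}(|\langle\mathbf{x},\mathbf{u}\rangle|>2\xi)\ge(\alpha-2\xi)^2/(4ck^2)$ for all unit $\mathbf{u}$. Tail function: $Q_{s}(\mathbf{v})=\mathbb{P}(|\langle\mathbf{x},\mathbf{v}\rangle|>s)$. Groups $g=1,\dots,G$ with sizes $n_g$, $n=\sum_gn_g$, $n_0:=n$. For $g\in\{0,\dots,G\}$, $\mathcal{C}_g\subseteq\mathbb{R}^p$ are the error cones (cone generated by $\{\boldsymbol{\delta}:f_g(\boldsymbol{\beta}_g^*+\boldsymbol{\delta})\le f_g(\boldsymbol{\beta}_g^* )\}$ for convex $f_g$), and $\mathcal{H}=\{(\boldsymbol{\delta}_0,\dots,\boldsymbol{\delta}_G):\boldsymbol{\delta}_g\in\mathcal{C}_g,\ \sum_{g=0}^G\frac{n_g}{n}\|\boldsymbol{\delta}_g\|_2=1\}$. DEIC: there exist $\mathcal{I}\subseteq\{1,\dots,G\}$, $0\le\bar\rho\le1$, $\lambda_{\min}>0$ with $\sum_{i\in\mathcal{I}}n_i\ge\lceil\bar\rho n\rceil$ and $\|\boldsymbol{\delta}_i+\boldsymbol{\delta}_0\|_2\ge\lambda_{\min}(\|\boldsymbol{\delta}_0\|_2+\|\boldsymbol{\delta}_i\|_2)$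 for all $i\in\mathcal{I}$, $\boldsymbol{\delta}_i\in\mathcal{C}_i$, $\boldsymbol{\delta}_0\in\mathcal{C}_0$. *)

From HB Require Import structures.
From mathcomp Require Import all_boot all_order all_algebra.
From mathcomp Require Import all_classical all_reals all_analysis.
Set Implicit Arguments. Unset Strict Implicit. Unset Printing Implicit Defensive.
Import Order.TTheory GRing.Theory Num.Theory.
Local Open Scope classical_set_scope.
Local Open Scope ring_scope.

Section Defs.
Context {R : realType} {p : nat}.

Definition dotp (u v : 'rV[R]_p) : R := \sum_(i < p) u 0 i * v 0 i.
Definition norm2 (v : 'rV[R]_p) : R := Num.sqrt (dotp v v).
Definition unit_sphere : set 'rV[R]_p := [set u | norm2 u = 1].

Definition convex_fun (f : 'rV[R]_p -> R) : Prop :=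
  forall (a b : 'rV[R]_p) (t : R), 0 <= t -> t <= 1 ->
    f (t *: a + (1 - t) *: b) <= t * f a + (1 - t) * f b.

Definition error_cone (f : 'rV[R]_p -> R) (beta : 'rV[R]_p) : set 'rV[R]_p :=
  [set d | exists (t : R) (s : 'rV[R]_p),
      0 <= t /\ f (beta + s) <= f beta /\ d = t *: s].
End Defs.

Section Prob.
Context {d : measure_display} {T : measurableType d} {R : realType} {p : nat}.
Variable P : probability T R.
Local Open Scope ereal_scope.

(* sub-Gaussian (psi_2) norm of a real random variable:
   inf { t > 0 | E exp (Y^2 / t^2) <= 2 }  (in \bar R, inf of empty = +oo) *)
Definition psi2_norm (Y : T -> R) : \bar R :=
  ereal_inf [set t%:E | t in [set t : R | (0 < t)%R /\
     'E_P[fun w => expR (Y w ^+ 2 / t ^+ 2)] <= 2%:E]].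

Definition psi2_norm_vec (x : T -> 'rV[R]_p) : \bar R :=
  ereal_sup [set psi2_norm (fun w => dotp (x w) u) | u in unit_sphere].

Definition Qtail (x : T -> 'rV[R]_p) (s : R) (v : 'rV[R]_p) : R :=
  fine (P [set w | (s < `|dotp (x w) v|)%R]).
End Prob.

From HB Require Import structures.
From mathcomp Require Import all_boot all_order all_algebra.
From mathcomp Require Import all_classical all_reals all_analysis.
From mathcomp Require Import ring lra.
Import Order.TTheory GRing.Theory Num.Theory.
Local Open Scope classical_set_scope.
Local Open Scope ring_scope.

(* Write a := ||delta_0||, b_g := ||delta_g||, t_g := ||delta_0 + delta_g|| and
   w_g := n_g / n, so that a + sum_g w_g b_g = 1 on H.  If a >= 1/3, DEIC on the
   groups of I, whose total weight is at least rho, gives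
   sum_g w_g t_g >= lmin a rho >= lmin rho / 3.  If a < 1/3, the reverse triangle
   inequality t_g >= b_g - a gives sum_g w_g t_g >= 1 - 2a > 1/3.  Finally, the
   small-ball bound P(|<x,u>| > 2 xi) >= eta applied to u = delta_0g / t_g makes
   each term w_g xi t_g Q_(2 xi t_g)(delta_0g) at least w_g xi t_g eta. *)

Section Euclidean.
Context {R : realType} {p : nat}.
Implicit Types (u v w : 'rV[R]_p) (a : R).

Lemma dotpC u v : dotp u v = dotp v u.
Proof. by apply: eq_bigr => i _; rewrite mulrC. Qed.

Lemma dotpZl a u v : dotp (a *: u) v = a * dotp u v.
Proof. by rewrite /dotp mulr_sumr; apply: eq_bigr => i _; rewrite mxE mulrA. Qed.

Lemma dotpZr a u v : dotp u (a *: v) = a * dotp u v.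
Proof. by rewrite dotpC dotpZl dotpC. Qed.

Lemma dotpDl u v w : dotp (u + v) w = dotp u w + dotp v w.
Proof. by rewrite /dotp -big_split; apply: eq_bigr => i _; rewrite mxE mulrDl. Qed.

Lemma dotpDr u v w : dotp w (u + v) = dotp w u + dotp w v.
Proof. by rewrite !(dotpC w) dotpDl. Qed.

Lemma dotpNl u v : dotp (- u) v = - dotp u v.
Proof. by rewrite -scaleN1r dotpZl mulN1r. Qed.

Lemma dotpNr u v : dotp u (- v) = - dotp u v.
Proof. by rewrite dotpC dotpNl dotpC. Qed.

Lemma dotpp_ge0 u : 0 <= dotp u u.
Proof. by apply: sumr_ge0 => i _; rewrite -expr2 sqr_ge0. Qed.

Lemma dotpp_eq0 u : dotp u u = 0 -> forall v, dotp u v = 0.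
Proof.
move=> /eqP; rewrite psumr_eq0 => [/allP u0 v|i _]; last by rewrite -expr2 sqr_ge0.
apply: big1 => i _; have /= := u0 i (mem_index_enum i).
by rewrite mulf_eq0 orbb => /eqP ->; rewrite mul0r.
Qed.

Lemma norm2_ge0 u : 0 <= norm2 u.
Proof. exact: sqrtr_ge0. Qed.

Lemma sqr_norm2 u : norm2 u ^+ 2 = dotp u u.
Proof. by rewrite sqr_sqrtr // dotpp_ge0. Qed.

Lemma norm2Z a u : norm2 (a *: u) = `|a| * norm2 u.
Proof. by rewrite /norm2 dotpZl dotpZr mulrA -expr2 sqrtrM ?sqr_ge0 // sqrtr_sqr. Qed.

Lemma norm2N u : norm2 (- u) = norm2 u.
Proof. by rewrite -scaleN1r norm2Z normrN1 mul1r. Qed.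

Lemma ler_dotp_norm2 u v : dotp u v <= norm2 u * norm2 v.
Proof.
set A := norm2 u; set B := norm2 v.
have [A0|A_neq0] := eqVneq A 0.
  have /dotpp_eq0 -> : dotp u u = 0 by rewrite -sqr_norm2 -/A A0 expr0n.
  by rewrite mulr_ge0 ?norm2_ge0.
have [B0|B_neq0] := eqVneq B 0.
  have /dotpp_eq0 v0 : dotp v v = 0 by rewrite -sqr_norm2 -/B B0 expr0n.
  by rewrite dotpC v0 mulr_ge0 ?norm2_ge0.
have AB_gt0 : 0 < A * B by rewrite mulr_gt0 // lt0r ?A_neq0 ?B_neq0 ?norm2_ge0.
(* 0 <= ||B u - A v||^2 = 2 A B (A B - <u, v>) *)
have := dotpp_ge0 (B *: u - A *: v).
rewrite dotpDl !dotpDr !dotpNl !dotpNr !dotpZl !dotpZr (dotpC v u) -!sqr_norm2 -/A -/B.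
set D := dotp u v => expansion_ge0.
suff : 0 <= A * B * (A * B - D) by rewrite pmulr_rge0 // subr_ge0.
lra.
Qed.

Lemma ler_norm2D u v : norm2 (u + v) <= norm2 u + norm2 v.
Proof.
rewrite -(ler_pXn2r (n := 2)) ?nnegrE ?addr_ge0 ?norm2_ge0 //.
rewrite sqr_norm2 dotpDl !dotpDr (dotpC v u) sqrrD !sqr_norm2.
have := ler_dotp_norm2 u v; lra.
Qed.

Lemma lerB_norm2D u v : norm2 v - norm2 u <= norm2 (u + v).
Proof.
have := ler_norm2D (u + v) (- u).
by rewrite addrAC subrr add0r norm2N lerBlDr.
Qed.

Lemma unit_sphere_normalize v : 0 < norm2 v -> unit_sphere ((norm2 v)^-1 *: v).
Proof.
by move=> v_gt0; rewrite /unit_sphere /= norm2Z gtr0_norm ?invr_gt0 // mulVf ?gt_eqF.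
Qed.

End Euclidean.

Section SmallBall.
Context {d : measure_display} {T : measurableType d} {R : realType} {p : nat}.
Variables (P : probability T R) (x : T -> 'rV[R]_p).
Hypothesis x_measurable : forall i : 'I_p, measurable_fun setT (fun w => x w ord0 i).

Lemma measurable_dotp_gt (s : R) (u : 'rV[R]_p) :
  measurable [set w | s < `|dotp (x w) u|].
Proof.
have mdotp : measurable_fun setT (fun w => `|dotp (x w) u|).
  apply: measurableT_comp; first exact: measurable_realfun.normr_measurable.
  apply: measurable_sum => i; apply: measurable_realfun.measurable_funM => //.
rewrite -[X in measurable X]setTI.
have -> : [set w | s < `|dotp (x w) u|] =
          (fun w => `|dotp (x w) u|) @^-1` `]s, +oo[.
  by apply/seteqP; split => w /=; rewrite in_itv /= andbT.
exact: mdotp.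
Qed.

Lemma norm2_mul_Qtail_ge (eta s : R) (v : 'rV[R]_p) :
  (forall u, unit_sphere u -> (eta%:E <= P [set w | (s < `|dotp (x w) u|)%R])%E) ->
  norm2 v * eta <= norm2 v * Qtail P x (s * norm2 v) v.
Proof.
move=> small_ball; have [->|v_neq0] := eqVneq (norm2 v) 0; first by rewrite !mul0r.
have v_gt0 : 0 < norm2 v by rewrite lt0r v_neq0 norm2_ge0.
rewrite ler_pM2l // /Qtail; set u := (norm2 v)^-1 *: v.
have -> : [set w | s * norm2 v < `|dotp (x w) v|] = [set w | s < `|dotp (x w) u|].
  apply: eq_set => w; rewrite dotpZr normrM gtr0_norm ?invr_gt0 //.
  by rewrite ltr_pdivlMl // mulrC.
have := small_ball u (unit_sphere_normalize _ v_gt0).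
rewrite -[X in (_ <= X)%E]fineK ?lee_fin //.
exact: fin_num_measure (measurable_dotp_gt s u).
Qed.

End SmallBall.

Lemma deic_weighted_sum_ge (R : realFieldType) (I : Type) (r : seq I) (J : pred I)
    (w b t : I -> R) (a lmin rho : R) :
  0 <= a -> (forall g, 0 <= w g) -> (forall g, 0 <= b g) -> (forall g, 0 <= t g) ->
  \sum_(g <- r) w g = 1 -> a + \sum_(g <- r) w g * b g = 1 ->
  (forall g, b g - a <= t g) -> (forall g, J g -> lmin * (a + b g) <= t g) ->
  rho <= \sum_(g <- r | J g) w g -> 0 < lmin <= 1 -> 0 <= rho <= 1 ->
  lmin * rho / 3 <= \sum_(g <- r) w g * t g.
Proof.
move=> a_ge0 w_ge0 b_ge0 t_ge0 w_sum1 ab_sum1 t_ge_spread t_ge_deic rho_le.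
move=> /andP[lmin_gt0 lmin_le1] /andP[rho_ge0 rho_le1].
have [a_big|a_small] := lerP (1 / 3) a.
  have t_ge_a g : J g -> lmin * a <= t g.
    by move=> Jg; apply: le_trans (t_ge_deic g Jg); rewrite ler_pM2l // lerDl.
  apply: (@le_trans _ _ (lmin * a * \sum_(g <- r | J g) w g)).
    apply: (@le_trans _ _ (lmin * a * rho)).
      by have := mulr_ge0 (ltW lmin_gt0) rho_ge0; nra.
    by rewrite ler_pM2l // mulr_gt0 // (lt_le_trans _ a_big).
  rewrite mulr_sumr [X in _ <= X](bigID J) /= -[X in X <= _]addr0.
  apply: lerD; last by apply: sumr_ge0 => g _; rewrite mulr_ge0.
  apply: ler_sum => g Jg; rewrite mulrC.
  by apply: ler_wpM2l; [exact: w_ge0 | exact: t_ge_a].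
have spread g : lmin * (b g - a) <= t g.
  by have := t_ge_spread g; have := t_ge0 g; nra.
apply: (@le_trans _ _ (\sum_(g <- r) w g * (lmin * (b g - a)))).
  under eq_bigr do rewrite mulrCA mulrBr.
  rewrite -mulr_sumr sumrB -mulr_suml w_sum1 mul1r.
  nra.
by apply: ler_sum => g _; apply: ler_wpM2l.
Qed.

Lemma sum_natr_shares (R : numFieldType) (I : Type) (r : seq I) (s : I -> nat) :
  (0 < \sum_(i <- r) s i)%N ->
  \sum_(i <- r) (s i)%:R / (\sum_(j <- r) s j)%:R = 1 :> R.
Proof. by move=> s_gt0; rewrite -mulr_suml -natr_sum divff // pnatr_eq0 -lt0n. Qed.

Lemma ceil_mul_natr_le (R : archiRealFieldType) (rho : R) (m n : nat) :
  (0 < n)%N -> Num.ceil (rho * n%:R) <= m%:Z -> rho <= m%:R / n%:R.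
Proof.
move=> n_gt0 ceil_le; rewrite ler_pdivlMr ?ltr0n //.
by apply: le_trans (ceil_ge _) _; rewrite -[m%:R]/((m%:Z)%:~R) ler_int.
Qed.

Section GroupWeights.
Variables (R : numFieldType) (G : nat) (nsz : nat -> nat).
Let n := (\sum_(1 <= g < G.+1) nsz g)%N.

Lemma group_weights_split (b : nat -> R) :
  \sum_(0 <= g < G.+1) (if g == 0%N then n else nsz g)%:R / n%:R * b g = 1 ->
  (0 < n)%N /\ b 0%N + \sum_(1 <= g < G.+1) (nsz g)%:R / n%:R * b g = 1.
Proof.
rewrite big_ltn // eqxx (@eq_big_nat _ _ _ 1 G.+1 _ (fun g => (nsz g)%:R / n%:R * b g)).
  (* with n = 0 every weight is n_g / 0 = 0, so the sum cannot be 1 *)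
  have [n0|n_gt0] := posnP n; last by rewrite divff ?pnatr_eq0 -?lt0n // mul1r.
  rewrite n0 invr0 mulr0 mul0r add0r big1 => [/eqP|g _]; last by rewrite mulr0 mul0r.
  by rewrite eq_sym oner_eq0.
by move=> g /andP[g_gt0 _]; rewrite gtn_eqF.
Qed.

End GroupWeights.

Theorem lemma2
  (* probability space and the random design vector x in R^p *)
  (d : measure_display) (T : measurableType d) (R : realType)
  (P : probability T R) (p : nat) (x : T -> 'rV[R]_p) (k alpha c : R)
  (Hxmeas : forall i : 'I_p, measurable_fun setT (fun w => x w ord0 i))
  (Hmean : forall i : 'I_p, ('E_P[fun w => x w ord0 i] = 0)%E)
  (Hiso : forall i j : 'I_p,
     ('E_P[fun w => (x w ord0 i * x w ord0 j)%R] = ((i == j)%:R)%:E)%E)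
  (Hsubg : (psi2_norm_vec P x <= k%:E)%E)
  (Halpha : 0 < alpha)
  (Hmom : forall u, unit_sphere u ->
     (alpha%:E <= 'E_P[fun w => (`|dotp (x w) u|)%R])%E)
  (Hc : 0 < c)
  (* groups 1..G with sizes nsz g, n = n_0 = sum of the group sizes *)
  (G : nat) (nsz : nat -> nat)
  (n := (\sum_(1 <= g < G.+1) nsz g)%N)
  (* error cones C_g, g = 0..G, generated by convex functions f_g at beta*_g *)
  (f : nat -> 'rV[R]_p -> R) (beta : nat -> 'rV[R]_p)
  (Hconv : forall g, (g <= G)%N -> convex_fun (f g))
  (* DEIC *)
  (I : pred nat) (rho lmin : R)
  (HI : forall i, I i -> (1 <= i <= G)%N)
  (Hrho : 0 <= rho <= 1)
  (Hlmin : 0 < lmin <= 1)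
  (HIsize : Num.ceil (rho * n%:R) <= ((\sum_(1 <= i < G.+1 | I i) nsz i)%N)%:Z)
  (HDEIC : forall i, I i -> forall di d0 : 'rV[R]_p,
     error_cone (f i) (beta i) di -> error_cone (f 0%N) (beta 0%N) d0 ->
     lmin * (norm2 d0 + norm2 di) <= norm2 (di + d0))
  (* xi and the small-ball constant c *)
  (xi : R) (Hxi : 0 < xi)
  (HPZ : forall u, unit_sphere u ->
     (((alpha - 2 * xi) ^+ 2 / (4 * c * k ^+ 2))%:E
        <= P [set w | (2 * xi < `|dotp (x w) u|)%R])%E) :
  let C g := error_cone (f g) (beta g) in
  let nw g := (if g == 0%N then n else nsz g)%:R / n%:R in
  let H := [set delta : nat -> 'rV[R]_p |
              (forall g, (g <= G)%N -> C g (delta g)) /\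
              \sum_(0 <= g < G.+1) nw g * norm2 (delta g) = 1] in
  let psiI := lmin * rho / 3 in
  let LHS (delta : nat -> 'rV[R]_p) :=
    \sum_(1 <= g < G.+1)
      let d0g := delta 0%N + delta g in
      let xig := xi * norm2 d0g in
      (nsz g)%:R / n%:R * xig * Qtail P x (2 * xig) d0g in
  (forall delta, H delta ->
     psiI * xi * ((alpha - 2 * xi) ^+ 2 / (4 * c * k ^+ 2)) *
       (norm2 (delta 0%N) + \sum_(1 <= g < G.+1) (nsz g)%:R / n%:R * norm2 (delta g))
     <= LHS delta) /\
  (forall delta, H delta ->
     psiI * xi * ((alpha - 2 * xi) ^+ 2 / (4 * c * k ^+ 2)) <= LHS delta).
Proof.
move=> C nw H psiI LHS.
set eta := (alpha - 2 * xi) ^+ 2 / _.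
have eta_ge0 : 0 <= eta.
  by rewrite /eta divr_ge0 ?sqr_ge0 // mulr_ge0 ?sqr_ge0 // mulr_ge0 // ltW.
suff key delta : H delta ->
    psiI * xi * eta <= LHS delta /\
    norm2 (delta 0%N) + \sum_(1 <= g < G.+1) (nsz g)%:R / n%:R * norm2 (delta g) = 1.
  by split=> delta /key[bound sum1]; rewrite ?sum1 ?mulr1.
move=> [delta_cone /group_weights_split[n_gt0 delta_sum1]]; split=> //.
set t := fun g => norm2 (delta 0%N + delta g).
have psiI_le : psiI <= \sum_(1 <= g < G.+1) (nsz g)%:R / n%:R * t g.
  apply: (@deic_weighted_sum_ge _ _ _ I _ (fun g => norm2 (delta g)) t
                                 (norm2 (delta 0%N))) => //.
  1-3: by move=> *; exact: norm2_ge0.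
  - exact: sum_natr_shares.
  - by move=> g; exact: lerB_norm2D.
  - move=> g Ig; have /andP[_ g_le_G] := HI g Ig; rewrite /t (addrC (delta 0%N)).
    exact: HDEIC (delta_cone g g_le_G) (delta_cone 0%N isT).
  - by rewrite -mulr_suml -natr_sum; exact: ceil_mul_natr_le.
apply: (@le_trans _ _ (\sum_(1 <= g < G.+1) (nsz g)%:R / n%:R * (xi * t g) * eta)).
  rewrite -mulr_suml; under eq_bigr do rewrite mulrCA.
  rewrite -mulr_sumr; apply: ler_wpM2r => //.
  by rewrite mulrC; apply: ler_wpM2l => //; exact: ltW.
apply: ler_sum => g _ /=.
rewrite -!(mulrA (_ / _)); apply: ler_wpM2l; first by rewrite divr_ge0.
rewrite -!(mulrA xi) (mulrA 2); apply: ler_wpM2l; first exact: ltW.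
exact: norm2_mul_Qtail_ge.
Qed.
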